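(* Under the hypotheses: $N\ge M$, $d_i>0$ for all $i$, $\mathbf{P}\in\mathbb{Z}_{\ge0}^N$ with $P_N>0$, $\mathbf{L}\in\mathbb{R}^{N\times M}$ full rank with non-negative entries and $L_{N,j}>0$ for all $j$, let $\boldsymbol\alpha^{(0)}\in\mathbb{R}^M$ have all components strictly positive and define $\boldsymbol\alpha^{(n+1)}=\mathbf{T}(\boldsymbol\alpha^{(n)})$. If the sequence $(\boldsymbol\alpha^{(n)})$ converges, then its limit satisfies both KKT conditions ($\tilde\alpha_j\partial_jl(\tilde{\boldsymbol\alpha})=0$ for all $j$, and $\partial_jl(\tilde{\boldsymbol\alpha})\le0$ whenever $\tilde\alpha_j=0$) and is therefore the unique maximizer of $l$ on the non-negative orthant.
   Context: $l(\boldsymbol\alpha)=\sum_{i=1}^N\big(P_i\log d_i-(\mathbf{L}\boldsymbol\alpha)_iP_i-d_i e^{-(\mathbf{L}\boldsymbol\alpha)_i}-\log(P_i!)\big)$ for $\boldsymbol\alpha\ge0$, with $\partial_j l(\boldsymbol\alpha)=\sum_i L_{i,j}\big(d_ie^{-(\mathbf{L}\boldsymbol\alpha)_i}-P_i\big)$. The map $\mathbf{T}$ is $\mathbf{T}(\boldsymbol\alpha)_j=\dfrac{(\mathbf{L}^T(\mathbf{d}\odot e^{-\mathbf{L}\boldsymbol\alpha}))_j}{(\mathbf{L}^T\mathbf{P})_j}\alpha_j$, with $\odot$ the componentwise product and the exponential taken componentwise. *)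

From Stdlib Require Import Reals Factorial.
Open Scope R_scope.

(* Vectors in R^n are functions nat -> R, only indices 0..n-1 matter.
   Matrix L in R^{N x M} is L : nat -> nat -> R, entry (i,j) = L i j.
   Paper index i = 1..N corresponds to Rocq index i-1. *)

Fixpoint fsum (n : nat) (f : nat -> R) : R :=
  match n with
  | O => 0
  | S k => fsum k f + f k
  end.

Definition Lmul (M : nat) (L : nat -> nat -> R) (a : nat -> R) (i : nat) : R :=
  fsum M (fun j => L i j * a j).

Definition loglik (N M : nat) (L : nat -> nat -> R) (d : nat -> R) (P : nat -> nat)
  (a : nat -> R) : R :=
  fsum N (fun i => INR (P i) * ln (d i) - Lmul M L a i * INR (P i)
                   - d i * exp (- Lmul M L a i) - ln (INR (fact (P i)))).

Definition dl (N M : nat) (L : nat -> nat -> R) (d : nat -> R) (P : nat -> nat)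
  (a : nat -> R) (j : nat) : R :=
  fsum N (fun i => L i j * (d i * exp (- Lmul M L a i) - INR (P i))).

Definition Tmap (N M : nat) (L : nat -> nat -> R) (d : nat -> R) (P : nat -> nat)
  (a : nat -> R) (j : nat) : R :=
  fsum N (fun i => L i j * (d i * exp (- Lmul M L a i)))
  / fsum N (fun i => L i j * INR (P i)) * a j.

Definition full_col_rank (N M : nat) (L : nat -> nat -> R) : Prop :=
  forall x : nat -> R,
    (forall i, (i < N)%nat -> Lmul M L x i = 0) ->
    forall j, (j < M)%nat -> x j = 0.

From Stdlib Require Import Reals Lra Lia.
Open Scope R_scope.

(* Write [A_j(a)] ([Tnum]) and [B_j] ([Tden]) for the numerator and denominator
   of [T], so that [T(a)_j = A_j(a) / B_j * a_j] and [d_j l(a) = A_j(a) - B_j],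
   with [B_j > 0].
   Passing to the limit in [a^(n+1) = T(a^(n))] shows that the limit is a fixed
   point of [T], whence [a_j (A_j - B_j) = 0].  If [a_j = 0] but
   [d_j l(a) > 0], then eventually [A_j(a^(n)) > B_j], so the positive
   sequence [a^(n)_j] eventually increases and cannot tend to 0.  Finally [l]
   is concave: with [u = L a - L b],
     l(a) - l(b) = sum_j (a_j - b_j) d_j l(b) - sum_i d_i e^{-(L b)_i} (e^{-u_i} - 1 + u_i),
   so at a KKT point both sums are <= 0 and [l(a) = l(b)] forces [L a = L b],
   hence [a = b] by the rank condition. *)

Lemma fsum_ext n f g :
  (forall k, (k < n)%nat -> f k = g k) -> fsum n f = fsum n g.
Proof. induction n as [|n IH]; simpl; intros H; [reflexivity|]. rewrite IH, H; auto. Qed.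

Lemma fsum_add n f g : fsum n (fun k => f k + g k) = fsum n f + fsum n g.
Proof. induction n as [|n IH]; simpl; [lra|]. rewrite IH; lra. Qed.

Lemma fsum_sub n f g : fsum n (fun k => f k - g k) = fsum n f - fsum n g.
Proof. induction n as [|n IH]; simpl; [lra|]. rewrite IH; lra. Qed.

Lemma fsum_scal n c f : fsum n (fun k => c * f k) = c * fsum n f.
Proof. induction n as [|n IH]; simpl; [lra|]. rewrite IH; lra. Qed.

Lemma fsum_exchange n m F :
  fsum n (fun i => fsum m (fun j => F i j)) = fsum m (fun j => fsum n (fun i => F i j)).
Proof.
  induction n as [|n IH]; simpl.
  - induction m as [|m IHm]; simpl; [reflexivity|]. rewrite <- IHm; lra.
  - rewrite IH, <- fsum_add. reflexivity.
Qed.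

Lemma fsum_nonneg n f : (forall k, (k < n)%nat -> 0 <= f k) -> 0 <= fsum n f.
Proof.
  induction n as [|n IH]; simpl; intros H; [lra|].
  assert (0 <= fsum n f) by auto. assert (0 <= f n) by auto. lra.
Qed.

Lemma fsum_nonpos n f : (forall k, (k < n)%nat -> f k <= 0) -> fsum n f <= 0.
Proof.
  induction n as [|n IH]; simpl; intros H; [lra|].
  assert (fsum n f <= 0) by auto. assert (f n <= 0) by auto. lra.
Qed.

Lemma fsum_ge_term n f k :
  (forall k, (k < n)%nat -> 0 <= f k) -> (k < n)%nat -> f k <= fsum n f.
Proof.
  induction n as [|n IH]; simpl; intros H Hk; [lia|].
  destruct (Nat.eq_dec k n) as [->|Hne].
  - assert (0 <= fsum n f) by (apply fsum_nonneg; auto). lra.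
  - assert (f k <= fsum n f) by (apply IH; auto; lia). assert (0 <= f n) by auto. lra.
Qed.

Lemma fsum_nonneg_eq0 n f :
  (forall k, (k < n)%nat -> 0 <= f k) -> fsum n f = 0 -> forall k, (k < n)%nat -> f k = 0.
Proof.
  intros H Hsum k Hk. pose proof (fsum_ge_term n f k H Hk). pose proof (H k Hk). lra.
Qed.

Lemma Un_cv_const c : Un_cv (fun _ => c) c.
Proof. intros e He. exists O. intros. unfold Rdist. rewrite Rminus_diag, Rabs_R0. lra. Qed.

Lemma Un_cv_fsum n u l :
  (forall k, (k < n)%nat -> Un_cv (u k) (l k)) ->
  Un_cv (fun t => fsum n (fun k => u k t)) (fsum n l).
Proof.
  induction n as [|n IH]; simpl; intros H; [apply Un_cv_const|].
  apply CV_plus; auto.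
Qed.

Lemma Un_cv_S u l : Un_cv u l -> Un_cv (fun n => u (S n)) l.
Proof.
  intros H. apply (Un_cv_ext (fun n => u (n + 1)%nat)).
  - intros n. rewrite Nat.add_1_r. reflexivity.
  - apply CV_shift', H.
Qed.

Lemma Un_cv_exp_opp u l : Un_cv u l -> Un_cv (fun n => exp (- u n)) (exp (- l)).
Proof.
  intros H. apply (continuity_seq exp (fun n => - u n)).
  - apply derivable_continuous, derivable_exp.
  - apply CV_opp, H.
Qed.

Lemma Un_cv_pos_limit_nonneg u l : (forall n, 0 < u n) -> Un_cv u l -> 0 <= l.
Proof.
  intros Hpos H. destruct (Rle_or_lt 0 l) as [|Hl]; auto.
  destruct (H (- l)) as [n0 Hn0]; [lra|]. specialize (Hn0 n0 (le_n _)).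
  specialize (Hpos n0). unfold Rdist in Hn0. apply Rabs_def2 in Hn0. lra.
Qed.

Lemma Un_cv_pos_eventually_increasing_neq0 u n0 :
  (forall n, 0 < u n) -> (forall n, (n0 <= n)%nat -> u n <= u (S n)) -> ~ Un_cv u 0.
Proof.
  intros Hpos Hinc Hcv.
  assert (Hmono : forall k, u n0 <= u (n0 + k)%nat).
  { induction k as [|k IH]; [rewrite Nat.add_0_r; lra|].
    rewrite Nat.add_succ_r. pose proof (Hinc (n0 + k)%nat ltac:(lia)). lra. }
  destruct (Hcv (u n0) (Hpos n0)) as [n1 Hn1].
  specialize (Hn1 (n0 + n1)%nat ltac:(lia)). specialize (Hmono n1).
  unfold Rdist in Hn1. rewrite Rminus_0_r in Hn1. apply Rabs_def2 in Hn1. lra.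
Qed.

Definition exp_gap (x : R) : R := exp (- x) - (1 - x).

Lemma exp_gap_nonneg x : 0 <= exp_gap x.
Proof. unfold exp_gap. pose proof (exp_ineq1_le (- x)). lra. Qed.

Lemma exp_gap_eq0 x : exp_gap x = 0 -> x = 0.
Proof.
  unfold exp_gap. intros H. destruct (Req_dec x 0) as [|Hx]; auto.
  pose proof (exp_ineq1 (- x) ltac:(lra)). lra.
Qed.

Section Loglik.

Variables (N M : nat) (L : nat -> nat -> R) (d : nat -> R) (P : nat -> nat).
Hypothesis d_pos : forall i, (i < N)%nat -> 0 < d i.

Lemma Lmul_sub a b i : Lmul M L (fun j => a j - b j) i = Lmul M L a i - Lmul M L b i.
Proof. unfold Lmul. rewrite <- fsum_sub. apply fsum_ext. intros; ring. Qed.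

Lemma loglik_sub a b :
  loglik N M L d P a - loglik N M L d P b =
  fsum M (fun j => (a j - b j) * dl N M L d P b j)
  - fsum N (fun i => d i * exp (- Lmul M L b i) * exp_gap (Lmul M L a i - Lmul M L b i)).
Proof.
  unfold loglik, exp_gap. rewrite <- fsum_sub.
  transitivity (fsum N (fun i =>
     (d i * exp (- Lmul M L b i) - INR (P i)) * (Lmul M L a i - Lmul M L b i)
     - d i * exp (- Lmul M L b i) * (exp (- (Lmul M L a i - Lmul M L b i))
                                    - (1 - (Lmul M L a i - Lmul M L b i))))).
  { apply fsum_ext. intros i _.
    replace (exp (- Lmul M L a i))
      with (exp (- Lmul M L b i) * exp (- (Lmul M L a i - Lmul M L b i)))
      by (rewrite <- exp_plus; f_equal; ring).
    ring. }
  rewrite fsum_sub. f_equal.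
  transitivity (fsum N (fun i => fsum M (fun j =>
     (a j - b j) * (L i j * (d i * exp (- Lmul M L b i) - INR (P i)))))).
  { apply fsum_ext. intros i _. rewrite <- Lmul_sub. unfold Lmul.
    rewrite <- fsum_scal. apply fsum_ext. intros; ring. }
  rewrite fsum_exchange. apply fsum_ext. intros j _. unfold dl. apply fsum_scal.
Qed.

Variable b : nat -> R.
Hypothesis b_slack : forall j, (j < M)%nat -> b j * dl N M L d P b j = 0.
Hypothesis b_dual : forall j, (j < M)%nat -> b j = 0 -> dl N M L d P b j <= 0.

Lemma kkt_first_order a :
  (forall j, (j < M)%nat -> 0 <= a j) ->
  fsum M (fun j => (a j - b j) * dl N M L d P b j) <= 0.
Proof.
  intros Ha. apply fsum_nonpos. intros j Hj.
  destruct (Req_dec (b j) 0) as [Hz|Hz].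
  - rewrite Hz. pose proof (b_dual j Hj Hz). pose proof (Ha j Hj). nra.
  - destruct (Rmult_integral _ _ (b_slack j Hj)) as [|Hdl]; [contradiction|].
    rewrite Hdl. lra.
Qed.

Lemma loglik_gap_nonneg a :
  0 <= fsum N (fun i => d i * exp (- Lmul M L b i) * exp_gap (Lmul M L a i - Lmul M L b i)).
Proof.
  apply fsum_nonneg. intros i Hi. apply Rmult_le_pos; [|apply exp_gap_nonneg].
  apply Rlt_le, Rmult_lt_0_compat; [auto|apply exp_pos].
Qed.

Lemma kkt_loglik_max a :
  (forall j, (j < M)%nat -> 0 <= a j) -> loglik N M L d P a <= loglik N M L d P b.
Proof.
  intros Ha. pose proof (loglik_sub a b). pose proof (kkt_first_order a Ha).
  pose proof (loglik_gap_nonneg a). lra.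
Qed.

Lemma kkt_loglik_max_unique :
  full_col_rank N M L -> forall a, (forall j, (j < M)%nat -> 0 <= a j) ->
  loglik N M L d P a = loglik N M L d P b -> forall j, (j < M)%nat -> a j = b j.
Proof.
  intros Hrank a Ha Heq.
  pose proof (loglik_sub a b). pose proof (kkt_first_order a Ha).
  pose proof (loglik_gap_nonneg a).
  assert (Hfit : forall i, (i < N)%nat -> Lmul M L a i - Lmul M L b i = 0).
  { intros i Hi. apply exp_gap_eq0.
    assert (Hterm : d i * exp (- Lmul M L b i) * exp_gap (Lmul M L a i - Lmul M L b i) = 0).
    { refine (fsum_nonneg_eq0 N (fun i => d i * exp (- Lmul M L b i) *
        exp_gap (Lmul M L a i - Lmul M L b i)) _ _ i Hi); [|lra].
      intros k Hk. apply Rmult_le_pos; [|apply exp_gap_nonneg].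
      apply Rlt_le, Rmult_lt_0_compat; [auto|apply exp_pos]. }
    apply Rmult_integral in Hterm as [Hc|]; auto.
    pose proof (Rmult_lt_0_compat _ _ (d_pos i Hi) (exp_pos (- Lmul M L b i))). lra. }
  intros j Hj. assert (a j - b j = 0); [|lra].
  apply (Hrank (fun j => a j - b j)); auto.
  intros i Hi. rewrite Lmul_sub. auto.
Qed.

End Loglik.

Section Iteration.

Variables (N M : nat) (L : nat -> nat -> R) (d : nat -> R) (P : nat -> nat).
Hypothesis M_le_N : (M <= N)%nat.
Hypothesis d_pos : forall i, (i < N)%nat -> 0 < d i.
Hypothesis P_last_pos : (0 < P (N - 1))%nat.
Hypothesis L_nonneg : forall i j, (i < N)%nat -> (j < M)%nat -> 0 <= L i j.
Hypothesis L_last_pos : forall j, (j < M)%nat -> 0 < L (N - 1)%nat j.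

Definition Tnum (a : nat -> R) (j : nat) : R :=
  fsum N (fun i => L i j * (d i * exp (- Lmul M L a i))).

Definition Tden (j : nat) : R := fsum N (fun i => L i j * INR (P i)).

Lemma Tmap_Tnum_Tden a j : Tmap N M L d P a j = Tnum a j / Tden j * a j.
Proof. reflexivity. Qed.

Lemma dl_Tnum_Tden a j : dl N M L d P a j = Tnum a j - Tden j.
Proof. unfold dl, Tnum, Tden. rewrite <- fsum_sub. apply fsum_ext. intros; ring. Qed.

Lemma Tden_pos j : (j < M)%nat -> 0 < Tden j.
Proof.
  intros Hj. apply Rlt_le_trans with (L (N - 1)%nat j * INR (P (N - 1)%nat)).
  - apply Rmult_lt_0_compat; [auto|apply lt_0_INR; auto].
  - apply (fsum_ge_term N (fun i => L i j * INR (P i))); [|lia].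
    intros; apply Rmult_le_pos; [auto|apply pos_INR].
Qed.

Lemma Tnum_pos a j : (j < M)%nat -> 0 < Tnum a j.
Proof.
  intros Hj. apply Rlt_le_trans with (L (N - 1)%nat j * (d (N - 1)%nat * exp (- Lmul M L a (N - 1)%nat))).
  - apply Rmult_lt_0_compat; [auto|]. apply Rmult_lt_0_compat; [apply d_pos; lia|apply exp_pos].
  - apply (fsum_ge_term N (fun i => L i j * (d i * exp (- Lmul M L a i)))); [|lia].
    intros i Hi. apply Rmult_le_pos; [auto|].
    apply Rmult_le_pos; [apply Rlt_le, d_pos; auto|apply Rlt_le, exp_pos].
Qed.

Lemma Tmap_pos a j : (j < M)%nat -> 0 < a j -> 0 < Tmap N M L d P a j.
Proof.
  intros Hj Ha. rewrite Tmap_Tnum_Tden.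
  apply Rmult_lt_0_compat; [apply Rdiv_lt_0_compat; [apply Tnum_pos|apply Tden_pos]|]; auto.
Qed.

Lemma Tmap_fixpoint_slack a j :
  (j < M)%nat -> a j = Tmap N M L d P a j -> a j * dl N M L d P a j = 0.
Proof.
  intros Hj Hfix. rewrite Tmap_Tnum_Tden in Hfix. rewrite dl_Tnum_Tden.
  pose proof (Tden_pos j Hj).
  replace (a j * (Tnum a j - Tden j)) with (Tden j * (Tnum a j / Tden j * a j - a j))
    by (field; lra).
  rewrite <- Hfix. ring.
Qed.

Lemma Un_cv_Tnum (a : nat -> nat -> R) b j :
  (forall k, (k < M)%nat -> Un_cv (fun n => a n k) (b k)) ->
  Un_cv (fun n => Tnum (a n) j) (Tnum b j).
Proof.
  intros Hcv. apply (Un_cv_fsum N (fun i n => L i j * (d i * exp (- Lmul M L (a n) i)))).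
  intros i Hi. apply CV_mult; [apply Un_cv_const|]. apply CV_mult; [apply Un_cv_const|].
  apply Un_cv_exp_opp, (Un_cv_fsum M (fun k n => L i k * a n k)).
  intros k Hk. apply CV_mult; [apply Un_cv_const|auto].
Qed.

Variables (alpha : nat -> nat -> R) (b : nat -> R).
Hypothesis alpha0_pos : forall j, (j < M)%nat -> 0 < alpha O j.
Hypothesis alpha_S : forall n j, (j < M)%nat -> alpha (S n) j = Tmap N M L d P (alpha n) j.
Hypothesis alpha_cv : forall j, (j < M)%nat -> Un_cv (fun n => alpha n j) (b j).

Lemma iterate_pos n j : (j < M)%nat -> 0 < alpha n j.
Proof.
  revert j; induction n as [|n IH]; intros j Hj; [auto|].
  rewrite alpha_S; auto. apply Tmap_pos; auto.
Qed.

Lemma limit_nonneg j : (j < M)%nat -> 0 <= b j.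
Proof.
  intros Hj. apply (Un_cv_pos_limit_nonneg (fun n => alpha n j)); auto.
  intros n; apply iterate_pos, Hj.
Qed.

Lemma limit_fixpoint j : (j < M)%nat -> b j = Tmap N M L d P b j.
Proof.
  intros Hj. apply (UL_sequence (fun n => alpha (S n) j)).
  - apply (Un_cv_S (fun n => alpha n j)), alpha_cv, Hj.
  - apply (Un_cv_ext (fun n => Tnum (alpha n) j / Tden j * alpha n j)).
    + intros n. rewrite alpha_S; auto.
    + apply CV_mult; [|auto]. unfold Rdiv.
      apply CV_mult; [apply Un_cv_Tnum, alpha_cv|apply Un_cv_const].
Qed.

Lemma limit_slack j : (j < M)%nat -> b j * dl N M L d P b j = 0.
Proof. intros Hj. apply Tmap_fixpoint_slack, limit_fixpoint; exact Hj. Qed.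

Lemma limit_dual j : (j < M)%nat -> b j = 0 -> dl N M L d P b j <= 0.
Proof.
  intros Hj Hz. rewrite dl_Tnum_Tden. apply Rnot_lt_le. intros Hgt.
  destruct (Un_cv_Tnum alpha b j alpha_cv (Tnum b j - Tden j)) as [n0 Hn0]; [lra|].
  apply (Un_cv_pos_eventually_increasing_neq0 (fun n => alpha n j) n0).
  - intros n; apply iterate_pos, Hj.
  - intros n Hn. specialize (Hn0 n Hn). unfold Rdist in Hn0. apply Rabs_def2 in Hn0.
    rewrite alpha_S, Tmap_Tnum_Tden; auto.
    pose proof (Tden_pos j Hj). pose proof (iterate_pos n j Hj).
    assert (1 <= Tnum (alpha n) j / Tden j).
    { apply (Rmult_le_reg_r (Tden j)); auto. field_simplify; lra. }
    nra.
  - rewrite <- Hz. apply alpha_cv, Hj.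
Qed.

End Iteration.

Theorem mainTheorem3 (N M : nat) (L : nat -> nat -> R) (d : nat -> R)
  (P : nat -> nat) (alpha : nat -> nat -> R) (at_ : nat -> R) :
  (M <= N)%nat ->
  (forall i, (i < N)%nat -> 0 < d i) ->
  (0 < P (N - 1))%nat ->
  full_col_rank N M L ->
  (forall i j, (i < N)%nat -> (j < M)%nat -> 0 <= L i j) ->
  (forall j, (j < M)%nat -> 0 < L (N - 1)%nat j) ->
  (forall j, (j < M)%nat -> 0 < alpha O j) ->
  (forall n j, (j < M)%nat -> alpha (S n) j = Tmap N M L d P (alpha n) j) ->
  (forall j, (j < M)%nat -> Un_cv (fun n => alpha n j) (at_ j)) ->
  (* KKT conditions *)
  (forall j, (j < M)%nat -> at_ j * dl N M L d P at_ j = 0) /\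
  (forall j, (j < M)%nat -> at_ j = 0 -> dl N M L d P at_ j <= 0) /\
  (* unique maximizer of l on the non-negative orthant *)
  (forall j, (j < M)%nat -> 0 <= at_ j) /\
  (forall a : nat -> R, (forall j, (j < M)%nat -> 0 <= a j) ->
     loglik N M L d P a <= loglik N M L d P at_) /\
  (forall a : nat -> R, (forall j, (j < M)%nat -> 0 <= a j) ->
     loglik N M L d P a = loglik N M L d P at_ ->
     forall j, (j < M)%nat -> a j = at_ j).
Proof.
  intros HMN Hd HP Hrank HL HLN H0 Hrec Hcv.
  pose proof (limit_slack N M L d P HMN HP HL HLN alpha at_ Hrec Hcv) as Hslack.
  pose proof (limit_dual N M L d P HMN Hd HP HL HLN alpha at_ H0 Hrec Hcv) as Hdual.
  pose proof (limit_nonneg N M L d P HMN Hd HP HL HLN alpha at_ H0 Hrec Hcv) as Hnonneg.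
  split; [exact Hslack|]. split; [exact Hdual|]. split; [exact Hnonneg|]. split.
  - exact (kkt_loglik_max N M L d P Hd at_ Hslack Hdual).
  - exact (kkt_loglik_max_unique N M L d P Hd at_ Hslack Hdual Hrank).
Qed.
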